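(* Let $(X,\tau_\delta)_{\delta>0}$ be a Hilbert dilation system (not necessarily simple), and let $H,V\subseteq X$ be subspaces with $\dim H=\dim V\ge1$ and $V$ dilation-invariant. Define $f(\delta)=\cos\angle(\tau_\delta H,V)$ for $\delta>0$. Then $f$ is unimodal in the sense: whenever $0<a<b<c$ and $f(b)<f(c)$, we have $f(a)<f(b)$.
   Context: Hilbert dilation system: $X$ a finite-dimensional real Hilbert space, $X=\bigoplus_{\nu=1}^mX_\nu$ orthogonal, $\tau_\delta|_{X_\nu}=\delta^{-\nu}\mathrm{id}$ ($\delta>0$). $V$ is dilation-invariant if $\tau_\delta V=V$ for all $\delta>0$. On $\bigwedge^kX$ use the inner product with $\langle v_1\wedge\dots\wedge v_k,w_1\wedge\dots\wedge w_k\rangle=\det(\langle v_i,w_j\rangle)$; for a $k$-dimensional subspace $W$ with basis $w_1,\ldots,w_k$ let $\omega_W=w_1\wedge\dots\wedge w_k$. For $k$-dimensional subspaces $V,W$, $\cos\angle(V,W)=|\langle\omega_V,\omega_W\rangle|/(|\omega_V||\omega_W|)$ (independent of bases). *)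

From HB Require Import structures.
From mathcomp Require Import all_boot all_order all_algebra.
From mathcomp Require Import reals.
Set Implicit Arguments. Unset Strict Implicit. Unset Printing Implicit Defensive.
Import Order.TTheory GRing.Theory Num.Theory.
Local Open Scope ring_scope.

(* X = R^n (row vectors 'rV[R]_n) with the standard inner product <u,v> = u *m v^T.
   A k-dimensional subspace W is given by a basis, i.e. a row-free matrix
   B : 'M_(k,n) whose rows w_1..w_k span W.
   Inner product on /\^k X:  <v_1/\../\v_k, w_1/\../\w_k> = det(<v_i,w_j>),
   so for bases A, B:  <omega_A, omega_B> = det (A *m B^T). *)
Definition wedge_dot (R : realType) (k n : nat) (A B : 'M[R]_(k, n)) : R :=
  \det (A *m B^T).

Definition wedge_norm (R : realType) (k n : nat) (A : 'M[R]_(k, n)) : R :=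
  Num.sqrt (wedge_dot A A).

Definition cos_angle (R : realType) (k n : nat) (A B : 'M[R]_(k, n)) : R :=
  `|wedge_dot A B| / (wedge_norm A * wedge_norm B).

From HB Require Import structures.
From mathcomp Require Import all_boot all_order all_algebra all_fingroup.
From mathcomp Require Import reals ring lra.
Set Implicit Arguments. Unset Strict Implicit. Unset Printing Implicit Defensive.
Import Order.TTheory GRing.Theory Num.Theory.
Local Open Scope ring_scope.

(* Let P_i be the orthogonal projections onto the layers X_i; then
   tau_d = sum_i d^-(i+1) P_i is symmetric and tau_d^-1 = tau_(1/d).  Since V
   is tau-invariant, vb tau_d = M vb with M invertible, and eliminating det M
   gives, for bases hb of H and vb of V,
       f(d)^2 = <hb, vb>^2 / h(d),   h(d) = Gram(hb tau_d) * Gram(vb tau_(1/d)).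
   A weighted Cauchy-Binet formula shows that each Gram determinant of
   X tau_d is a sum of monomials d^z with nonnegative coefficients and integer
   exponents, and such "positive Laurent sums" are closed under products and
   d |-> 1/d.  Each monomial is convex on (0, +oo) (Bernoulli's inequality), so
   a decrease of h on [b, c] forces a decrease on [a, b]; through f^2 = K / h
   this is exactly the claimed unimodality. *)

Section CauchyBinet.
Variable R : comNzRingType.

Lemma det_mul_expand (J : finType) k (B : 'I_k -> J -> R) (C : J -> 'I_k -> R) :
  \det (\matrix_(i, j) \sum_x B i x * C x j) =
  \sum_(f : {ffun 'I_k -> J}) (\prod_i B i (f i)) * \det (\matrix_(i, j) C (f i) j).
Proof.
rewrite /determinant.
transitivity (\sum_(s : 'S_k) \sum_(f : {ffun 'I_k -> J})
   (-1) ^+ s * \prod_i (B i (f i) * C (f i) (s i))).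
  apply: eq_bigr => s _; rewrite -big_distrr /=; congr (_ * _).
  rewrite -(bigA_distr_bigA (fun i x => B i x * C x (s i))) /=.
  by apply: eq_bigr => i _; rewrite mxE.
rewrite exchange_big; apply: eq_bigr => f _; rewrite big_distrr.
apply: eq_bigr => s _ /=; rewrite big_split /=.
under [X in _ = _ * (_ * X)]eq_bigr do rewrite mxE.
by rewrite mulrCA.
Qed.

(* Symmetrizing the
   expansion above over permutations of 'I_k produces the squares. *)
Lemma det_weighted_gram (J : finType) k (a : 'I_k -> J -> R) (l : J -> R) :
  k`!%:R * \det (\matrix_(i, j) \sum_x a i x * l x * a j x) =
  \sum_(f : {ffun 'I_k -> J}) (\prod_i l (f i)) * \det (\matrix_(i, j) a j (f i)) ^+ 2.
Proof.
rewrite (det_mul_expand (fun i x => a i x * l x) (fun x j => a j x)).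
set D := fun f : {ffun 'I_k -> J} => \det (\matrix_(i, j) a j (f i)).
set S := \sum_f _.
have S_perm (s : 'S_k) : S = \sum_(f : {ffun 'I_k -> J})
    (-1) ^+ s * (\prod_i a i (f (s i))) * (\prod_i l (f i)) * D f.
  pose fs (f : {ffun 'I_k -> J}) := [ffun i => f (s i)].
  have fs_inj : injective fs.
    move=> f g /ffunP E; apply/ffunP => i.
    by move: (E (s^-1 i)%g); rewrite !ffunE permKV.
  rewrite /S (reindex_inj fs_inj); apply: eq_bigr => f _ /=.
  rewrite big_split /=; under eq_bigr do rewrite ffunE.
  have -> : \prod_i l (fs f i) = \prod_i l (f i).
    under eq_bigr do rewrite ffunE.
    by rewrite (reindex_perm s^-1) /=; under eq_bigr do rewrite permKV.
  have -> : \det (\matrix_(i, j) a j (fs f i)) = (-1) ^+ s * D f.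
    rewrite /D -det_perm -det_mulmx -row_permE; congr (\det _).
    by apply/matrixP => i j; rewrite !mxE ffunE.
  by rewrite !mulrA; congr (_ * _); rewrite mulrC -!mulrA; congr (_ * _); rewrite mulrC.
transitivity (\sum_(s : 'S_k) S); first by rewrite sumr_const card_Sn mulr_natl.
under eq_bigr => s _ do rewrite (S_perm s).
rewrite exchange_big; apply: eq_bigr => f _ /=.
have D_sum : \sum_(s : 'S_k) (-1) ^+ s * \prod_i a i (f (s i)) = D f.
  rewrite /D -det_tr /determinant; apply: eq_bigr => s _; congr (_ * _).
  by apply: eq_bigr => i _; rewrite !mxE.
rewrite -big_distrl -big_distrl /= D_sum /D; ring.
Qed.

End CauchyBinet.

(* Gram determinants are nonnegative: det(A A^T) is, up to the factor k!,
   a sum of squares of minors. *)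
Lemma gram_ge0 (R : realFieldType) k n (A : 'M[R]_(k, n)) : 0 <= \det (A *m A^T).
Proof.
have kf_gt0 : 0 < k`!%:R :> R by rewrite ltr0n fact_gt0.
rewrite -(pmulr_rge0 _ kf_gt0).
have -> : A *m A^T = \matrix_(i, j) \sum_x A i x * 1 * A j x.
  by apply/matrixP => i j; rewrite !mxE; apply: eq_bigr => x _; rewrite mxE mulr1.
rewrite det_weighted_gram; apply: sumr_ge0 => f _.
by rewrite big1_eq mul1r sqr_ge0.
Qed.

Section PositiveLaurentSums.
Variable R : realFieldType.

Lemma bernoulli_nat (r : R) n : 0 <= r -> 1 + n%:R * (r - 1) <= r ^+ n.
Proof.
move=> r_ge0; elim: n => [|n IHn]; first by rewrite mul0r addr0 expr0.
rewrite exprS.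
have step : r * (1 + n%:R * (r - 1)) <= r * r ^+ n by rewrite ler_wpM2l.
have sq_ge0 : 0 <= n%:R * (r - 1) ^+ 2 :> R by rewrite mulr_ge0 ?sqr_ge0.
apply: le_trans step; rewrite -natr1; nra.
Qed.

Lemma bernoulli_int (r : R) (z : int) : 0 < r -> 1 + z%:~R * (r - 1) <= r ^ z.
Proof.
move=> r_gt0; case: z => n.
  by rewrite /exprz -pmulrn; apply: bernoulli_nat; rewrite ltW.
rewrite /exprz NegzE -exprVn.
have rV_gt0 : 0 < r^-1 by rewrite invr_gt0.
have tangent := bernoulli_nat n.+1 (ltW rV_gt0).
apply: le_trans tangent.
rewrite intrN /= -[n.+1%:~R]/(n.+1%:R : R).
have sum_eq : r^-1 - 1 + (r - 1) = (r - 1) ^+ 2 / r by field; rewrite gt_eqF.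
have : 0 <= (r - 1) ^+ 2 / r by rewrite divr_ge0 ?sqr_ge0 ?ltW.
have : 0 <= n.+1%:R :> R by [].
nra.
Qed.

(* Chord-slope inequality for d |-> d ^ z on (0, +oo), a consequence of
   convexity: with mu = (b - a) / (c - b), mu (b^z - c^z) <= a^z - b^z. *)
Lemma exprz_chord (a b c : R) (z : int) : 0 < a -> a < b -> b < c ->
  (b - a) / (c - b) * (b ^ z - c ^ z) <= a ^ z - b ^ z.
Proof.
move=> a_gt0 ab bc.
have b_gt0 : 0 < b by apply: lt_trans ab.
have b_neq0 : b != 0 by rewrite gt_eqF.
have Ea : a ^ z = b ^ z * (a / b) ^ z by rewrite -expfzMl mulrC divfK.
have Ec : c ^ z = b ^ z * (c / b) ^ z by rewrite -expfzMl mulrC divfK.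
have Bz_gt0 : 0 < b ^ z by apply: exprz_gt0.
have tan_a := bernoulli_int z (divr_gt0 a_gt0 b_gt0).
have tan_c := bernoulli_int z (divr_gt0 (lt_trans b_gt0 bc) b_gt0).
set Z := z%:~R in tan_a tan_c.
set mu := (b - a) / (c - b).
have mu_gt0 : 0 < mu by rewrite divr_gt0 // subr_gt0.
have mu_eq : mu * (c / b - 1) = 1 - a / b.
  by rewrite /mu; field; rewrite b_neq0 subr_eq0 gt_eqF.
rewrite Ea Ec.
set ra := (a / b) ^ z in tan_a *; set rc := (c / b) ^ z in tan_c *.
set B := b ^ z in Bz_gt0 *.
set xa := a / b in tan_a mu_eq; set xc := c / b in tan_c mu_eq.
have k1 : 0 <= B * (ra - (1 + Z * (xa - 1))) by rewrite mulr_ge0 ?subr_ge0 // ltW.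
have k2 : 0 <= mu * B * (rc - (1 + Z * (xc - 1))).
  by rewrite mulr_ge0 ?subr_ge0 // ltW // mulr_gt0.
have k3 : mu * B * Z * (xc - 1) = B * Z * (1 - xa) by rewrite -mu_eq; ring.
nra.
Qed.

Definition pos_laurent (h : R -> R) : Prop :=
  exists (J : finType) (e : J -> R) (z : J -> int),
    (forall j, 0 <= e j) /\ forall d, 0 < d -> h d = \sum_j e j * d ^ z j.

Lemma pos_laurent_ge0 h d : pos_laurent h -> 0 < d -> 0 <= h d.
Proof.
move=> [J [e [z [e_ge0 E]]]] d_gt0; rewrite E //; apply: sumr_ge0 => j _.
by rewrite mulr_ge0 ?e_ge0 ?exprz_ge0 ?ltW.
Qed.

Lemma pos_laurent_gt0 h d d' : pos_laurent h -> 0 < d -> 0 < d' ->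
  0 < h d -> 0 < h d'.
Proof.
move=> [J [e [z [e_ge0 E]]]] d_gt0 d'_gt0; rewrite !E //.
move=> hd_gt0; have [j _ ej_gt0] : exists2 j, true & 0 < e j.
  apply/exists_inP; apply: contraLR hd_gt0; rewrite negb_exists_in => /forall_inP ej_le0.
  rewrite -leNgt; apply: sumr_le0 => j _.
  have -> : e j = 0 by apply/eqP; rewrite eq_le e_ge0 andbT leNgt ej_le0.
  by rewrite mul0r.
rewrite (bigD1 j) //=; apply: ltr_pwDl; first by rewrite mulr_gt0 ?exprz_gt0.
by apply: sumr_ge0 => i _; rewrite mulr_ge0 ?e_ge0 ?exprz_ge0 ?ltW.
Qed.

(* Summing the chord inequalities of the monomials gives
   mu (h b - h c) <= h a - h b with mu > 0. *)
Lemma pos_laurent_decr h a b c : pos_laurent h -> 0 < a -> a < b -> b < c ->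
  h c < h b -> h b < h a.
Proof.
move=> [J [e [z [e_ge0 E]]]] a_gt0 ab bc.
have b_gt0 : 0 < b by apply: lt_trans ab.
rewrite !E //; last exact: lt_trans bc.
move=> hcb; rewrite -subr_gt0.
have mu_gt0 : 0 < (b - a) / (c - b) by rewrite divr_gt0 // subr_gt0.
apply: (@lt_le_trans _ _
  ((b - a) / (c - b) * (\sum_j e j * b ^ z j - \sum_j e j * c ^ z j))).
  by rewrite mulr_gt0 // subr_gt0.
rewrite -!sumrB mulr_sumr; apply: ler_sum => j _.
rewrite -!mulrBr mulrCA; apply: ler_wpM2l; first exact: e_ge0.
exact: exprz_chord.
Qed.

Lemma pos_laurent_mul h1 h2 : pos_laurent h1 -> pos_laurent h2 ->
  pos_laurent (fun d => h1 d * h2 d).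
Proof.
move=> [J1 [e1 [z1 [e1_ge0 E1]]]] [J2 [e2 [z2 [e2_ge0 E2]]]].
exists (J1 * J2)%type, (fun p => e1 p.1 * e2 p.2), (fun p => z1 p.1 + z2 p.2).
split=> [p|d d_gt0]; first by rewrite mulr_ge0.
rewrite E1 // E2 // big_distrl /=.
rewrite -(pair_bigA _ (fun i j => e1 i * e2 j * d ^ (z1 i + z2 j))) /=.
apply: eq_bigr => i _; rewrite big_distrr /=; apply: eq_bigr => j _.
rewrite expfzDr ?gt_eqF //; ring.
Qed.

Lemma pos_laurent_inv h : pos_laurent h -> pos_laurent (fun d => h d^-1).
Proof.
move=> [J [e [z [e_ge0 E]]]]; exists J, e, (fun j => - z j); split => // d d_gt0.
by rewrite E ?invr_gt0 //; apply: eq_bigr => j _; rewrite exprz_inv.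
Qed.

Lemma pos_laurent_recip_unimodal h (F : R -> R) K a b c : pos_laurent h ->
  (forall d, 0 < d -> 0 <= F d /\ F d ^+ 2 = K / h d) ->
  0 < a -> a < b -> b < c -> F b < F c -> F a < F b.
Proof.
move=> hL FK a_gt0 ab bc Fbc.
have b_gt0 : 0 < b by apply: lt_trans ab.
have c_gt0 : 0 < c by apply: lt_trans bc.
have [Fa_ge0 Fa2] := FK a a_gt0; have [Fb_ge0 Fb2] := FK b b_gt0.
have [Fc_ge0 Fc2] := FK c c_gt0.
have Fsq : F b ^+ 2 < F c ^+ 2 by rewrite ltr_pXn2r ?nnegrE.
rewrite Fb2 Fc2 in Fsq.
have hc_gt0 : 0 < h c.
  rewrite lt_def pos_laurent_ge0 // andbT; apply/eqP => hc0; move: Fsq.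
  by rewrite hc0 invr0 mulr0 -Fb2 ltNge sqr_ge0.
have hb_gt0 := pos_laurent_gt0 hL c_gt0 b_gt0 hc_gt0.
have ha_gt0 := pos_laurent_gt0 hL c_gt0 a_gt0 hc_gt0.
have Kc_gt0 : 0 < K / h c by apply: le_lt_trans Fsq; rewrite -Fb2 sqr_ge0.
have K_gt0 : 0 < K by move: Kc_gt0; rewrite pmulr_lgt0 // invr_gt0.
have hcb : h c < h b by move: Fsq; rewrite ltr_pM2l // ltf_pV2 ?posrE.
have hba := pos_laurent_decr hL a_gt0 ab bc hcb.
by rewrite -(ltr_pXn2r (n := 2)) ?nnegrE // Fa2 Fb2 ltr_pM2l // ltf_pV2 ?posrE.
Qed.

End PositiveLaurentSums.

Section WedgeProducts.
Variable R : realType.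

Lemma wedge_dotMl k n (M : 'M[R]_k) (A B : 'M[R]_(k, n)) :
  wedge_dot (M *m A) B = \det M * wedge_dot A B.
Proof. by rewrite /wedge_dot -mulmxA det_mulmx. Qed.

Lemma wedge_dotMr k n (M : 'M[R]_k) (A B : 'M[R]_(k, n)) :
  wedge_dot A (M *m B) = wedge_dot A B * \det M.
Proof. by rewrite /wedge_dot trmx_mul mulmxA det_mulmx det_tr. Qed.

Lemma wedge_dot_sym_op k n (A B : 'M[R]_(k, n)) (T : 'M[R]_n) :
  T^T = T -> wedge_dot (A *m T) B = wedge_dot A (B *m T).
Proof. by move=> T_sym; rewrite /wedge_dot trmx_mul T_sym mulmxA. Qed.

Lemma cos_angle_ge0 k n (A B : 'M[R]_(k, n)) : 0 <= cos_angle A B.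
Proof. by rewrite divr_ge0 ?normr_ge0 ?mulr_ge0 ?sqrtr_ge0. Qed.

Lemma cos_angle_sqr k n (A B : 'M[R]_(k, n)) :
  cos_angle A B ^+ 2 = wedge_dot A B ^+ 2 / (wedge_dot A A * wedge_dot B B).
Proof.
by rewrite /cos_angle /wedge_norm expr_div_n exprMn !sqr_sqrtr ?gram_ge0
   ?real_normK ?num_real.
Qed.

(* Squared cosine between A T and an invariant subspace B, for a symmetric T
   with right inverse T': since B T = M B and B T' = M' B with M M' = 1,
   both det M and det M' can be eliminated. *)
Lemma cos_angle_sym_op_sqr k n (A B : 'M[R]_(k, n)) (T T' : 'M[R]_n) :
  T^T = T -> T *m T' = 1%:M -> row_free B ->
  (B *m T <= B)%MS -> (B *m T' <= B)%MS ->
  cos_angle (A *m T) B ^+ 2 =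
    wedge_dot A B ^+ 2 / (wedge_dot (A *m T) (A *m T) * wedge_dot (B *m T') (B *m T')).
Proof.
move=> T_sym TT' B_free /submxP [M BT] /submxP [M' BT'].
have MM' : M *m M' = 1%:M.
  apply: (row_free_inj B_free); rewrite mul1mx -mulmxA -BT' mulmxA -BT.
  by rewrite -mulmxA TT' mulmx1.
have detMM' : \det M * \det M' = 1 by rewrite -det_mulmx MM' det1.
have detM : \det M = (\det M')^-1.
  by rewrite -[LHS]mulr1 -(mulfV (_ : \det M' != 0)) ?mulrA ?detMM' ?mul1r //;
     apply: contra_eq_neq detMM' => ->; rewrite mulr0 eq_sym oner_neq0.
rewrite cos_angle_sqr wedge_dot_sym_op // BT wedge_dotMr BT'.
rewrite wedge_dotMl wedge_dotMr detM.
set x := \det M'; set c := wedge_dot A B; set g := wedge_dot B B.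
set p := wedge_dot (A *m T) (A *m T).
rewrite !invfM exprMn; ring.
Qed.

End WedgeProducts.

(* They are read off from the decomposition
   1 = sum_i U_i X_i of the identity. *)
Lemma layer_projections (R : fieldType) n m (Xs : 'I_m -> 'M[R]_n) :
  (forall i j, i != j -> Xs i *m (Xs j)^T = 0) -> (1%:M <= \sum_i Xs i)%MS ->
  exists P : 'I_m -> 'M[R]_n,
    [/\ \sum_i P i = 1%:M, forall i j, P i *m P j = if i == j then P i else 0,
        forall i, (P i)^T = P i & forall i, (P i <= Xs i)%MS].
Proof.
move=> Xs_orth /sub_sumsmxP [U P_sum].
pose P i := U i *m Xs i; exists P.
have P_orth i j : i != j -> P i *m (P j)^T = 0.
  move=> ij; rewrite /P trmx_mul !mulmxA -(mulmxA (U i)) Xs_orth //.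
  by rewrite mulmx0 mul0mx.
have PPt i : P i *m (P i)^T = (P i)^T.
  rewrite -[in RHS](mul1mx (P i)^T) P_sum mulmx_suml (bigD1 i) //=.
  by rewrite big1 ?addr0 // => j ji; rewrite P_orth.
have P_sym i : (P i)^T = P i.
  have E := congr1 trmx (PPt i); rewrite trmx_mul !trmxK in E.
  by rewrite -{1}(PPt i) E.
split=> [|i j|//|i]; [by rewrite P_sum | | exact: submxMl].
case: eqP => [<-|/eqP ij]; last by rewrite -[P j]P_sym P_orth.
by rewrite -{2}[P i]P_sym PPt P_sym.
Qed.

Section SpectralCalculus.
Variables (R : realFieldType) (n m : nat) (P : 'I_m -> 'M[R]_n).
Hypothesis P_sum : \sum_i P i = 1%:M.
Hypothesis P_mul : forall i j, P i *m P j = if i == j then P i else 0.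
Hypothesis P_sym : forall i, (P i)^T = P i.

Definition layer_op (al : 'I_m -> R) : 'M[R]_n := \sum_i al i *: P i.

Definition layer_dil (w : 'I_m -> int) (d : R) : 'M[R]_n := layer_op (fun i => d ^ w i).

Lemma layer_op_mul al be : layer_op al *m layer_op be = layer_op (fun i => al i * be i).
Proof.
rewrite mulmx_suml; apply: eq_bigr => i _.
rewrite mulmx_sumr (bigD1 i) //= big1 ?addr0.
  by rewrite -scalemxAl -scalemxAr P_mul eqxx scalerA.
by move=> j ji; rewrite -scalemxAl -scalemxAr P_mul eq_sym (negPf ji) !scaler0.
Qed.

Lemma layer_op_tr al : (layer_op al)^T = layer_op al.
Proof. by rewrite linear_sum; apply: eq_bigr => i _; rewrite linearZ /= P_sym. Qed.

Lemma layer_op1 : layer_op (fun _ => 1) = 1%:M.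
Proof. by rewrite -P_sum; apply: eq_bigr => i _; rewrite scale1r. Qed.

Lemma layer_dilV w d : d != 0 -> layer_dil w d *m layer_dil w d^-1 = 1%:M.
Proof.
move=> d_neq0; rewrite layer_op_mul -layer_op1; apply: eq_bigr => i _.
by rewrite exprz_inv -expfzDr // subrr.
Qed.

Lemma prodr_exprz (I : finType) (d : R) (z : I -> int) : d != 0 ->
  \prod_i d ^ z i = d ^ (\sum_i z i).
Proof.
move=> d_neq0; symmetry; apply: (big_morph (fun z : int => d ^ z)) => [x y|//].
by rewrite expfzDr.
Qed.

(* The Gram determinant of X tau_d is a positive Laurent sum in d: writing
   X tau_d (X tau_d)^T = sum_i d^(2 w i) (X P_i)(X P_i)^T, the weighted
   Cauchy-Binet formula expands it with coefficients (det of minors)^2 / k!. *)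
Lemma gram_layer_dil_laurent k (X : 'M[R]_(k, n)) w :
  pos_laurent (fun d => \det (X *m layer_dil w d *m (X *m layer_dil w d)^T)).
Proof.
pose a (r : 'I_k) (x : 'I_m * 'I_n) := (X *m P x.1) r x.2.
pose z (x : 'I_m * 'I_n) : int := w x.1 + w x.1.
exists {ffun 'I_k -> 'I_m * 'I_n}.
exists (fun f : {ffun 'I_k -> 'I_m * 'I_n} =>
  (k`!%:R)^-1 * \det (\matrix_(i, j) a j (f i)) ^+ 2).
exists (fun f : {ffun 'I_k -> 'I_m * 'I_n} => \sum_i z (f i)).
split=> [f|d d_gt0]; first by rewrite mulr_ge0 ?sqr_ge0 // invr_ge0 ler0n.
have gram_sum : X *m layer_dil w d *m (X *m layer_dil w d)^T =
    \matrix_(r, s) \sum_x a r x * d ^ z x * a s x.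
  rewrite trmx_mul -mulmxA (mulmxA (layer_dil w d)) layer_op_tr layer_op_mul.
  rewrite mulmx_suml mulmx_sumr.
  apply/matrixP => r s; rewrite [RHS]mxE summxE.
  rewrite -(pair_bigA _ (fun i j => a r (i, j) * d ^ z (i, j) * a s (i, j))) /=.
  apply: eq_bigr => i _.
  rewrite -scalemxAl -scalemxAr mxE mulmxA.
  have -> : X *m P i *m X^T = (X *m P i) *m (X *m P i)^T.
    by rewrite trmx_mul P_sym mulmxA -(mulmxA X (P i) (P i)) P_mul eqxx.
  rewrite mxE big_distrr /=; apply: eq_bigr => j _.
  rewrite mxE /a /z /= !mxE expfzDr ?gt_eqF //; ring.
have kf_neq0 : (k`!%:R : R) != 0 by rewrite pnatr_eq0 -lt0n fact_gt0.
apply: (mulfI kf_neq0); rewrite gram_sum det_weighted_gram mulr_sumr.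
apply: eq_bigr => f _.
rewrite prodr_exprz ?gt_eqF // !mulrA mulfV // mul1r; ring.
Qed.

End SpectralCalculus.

Lemma dilation_layer_dil (R : realFieldType) n m (Xs P : 'I_m -> 'M[R]_n)
    (tau : R -> 'M[R]_n) :
  \sum_i P i = 1%:M -> (forall i, (P i <= Xs i)%MS) ->
  (forall d : R, 0 < d -> forall (i : 'I_m) (v : 'rV[R]_n),
      (v <= Xs i)%MS -> v *m tau d = d ^- i.+1 *: v) ->
  forall d, 0 < d -> tau d = layer_dil P (fun i => - (i.+1)%:Z) d.
Proof.
move=> P_sum P_Xs tau_layer d d_gt0.
rewrite -[tau d]mul1mx -P_sum mulmx_suml; apply: eq_bigr => i _.
apply/row_matrixP => r; rewrite row_mul -exprnN.
have -> : row r (d ^- i.+1 *: P i) = d ^- i.+1 *: row r (P i).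
  by apply/rowP => j; rewrite !mxE.
by apply: tau_layer => //; apply: submx_trans (P_Xs i); rewrite row_sub.
Qed.

Theorem lemma4p6 (R : realType) (n m k : nat)
    (Xs : 'I_m -> 'M[R]_n) (tau : R -> 'M[R]_n)
    (hb vb : 'M[R]_(k, n)) :
  (forall i j : 'I_m, i != j -> Xs i *m (Xs j)^T = 0) ->
  (1%:M <= \sum_(i < m) Xs i)%MS ->
  (forall d : R, 0 < d -> forall (i : 'I_m) (v : 'rV[R]_n),
      (v <= Xs i)%MS -> v *m tau d = d ^- i.+1 *: v) ->
  (1 <= k)%N -> row_free hb -> row_free vb ->
  (forall d : R, 0 < d -> (vb *m tau d == vb)%MS) ->
  let f := fun d : R => cos_angle (hb *m tau d) vb in
  forall a b c : R, 0 < a -> a < b -> b < c ->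
    f b < f c -> f a < f b.
Proof.
move=> Xs_orth Xs_span tau_layer _ _ vb_free vb_inv f a b c a_gt0 ab bc.
have [P [P_sum P_mul P_sym P_Xs]] := layer_projections Xs_orth Xs_span.
pose w (i : 'I_m) : int := - (i.+1)%:Z.
have tau_dil := dilation_layer_dil P_sum P_Xs tau_layer.
pose gram (A : 'M[R]_(k, n)) := wedge_dot A A.
pose h d := gram (hb *m layer_dil P w d) * gram (vb *m layer_dil P w d^-1).
have h_laurent : pos_laurent h.
  apply: pos_laurent_mul (gram_layer_dil_laurent P_mul P_sym hb w) _.
  exact: pos_laurent_inv (gram_layer_dil_laurent P_mul P_sym vb w).
apply: (pos_laurent_recip_unimodal (h := h) (K := wedge_dot hb vb ^+ 2)) => //.
move=> d d_gt0; split; first exact: cos_angle_ge0.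
have dV_gt0 : 0 < d^-1 by rewrite invr_gt0.
have /andP [vb_d _] := vb_inv d d_gt0.
have /andP [vb_dV _] := vb_inv _ dV_gt0.
rewrite /f !tau_dil // in vb_d vb_dV *.
apply: cos_angle_sym_op_sqr => //; first exact: layer_op_tr.
by rewrite (layer_dilV P_sum) // gt_eqF.
Qed.
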